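(* Let $P$ be a poset. (1) If $I$ is a non-empty index set and $\mathcal{U}_i$ is a frame-generating join-specification for $P$ for each $i\in I$, then $\bigcup_{i\in I}\mathcal{U}_i$ is frame-generating. (2) Even finite unions of maximal frame-generating join-specifications need not be maximal: there exist a poset $Q$ and maximal frame-generating join-specifications $\mathcal{U}_1,\mathcal{U}_2$ for $Q$ such that $\mathcal{U}_1\cup\mathcal{U}_2$ is not maximal. (3) If $I$ is a non-empty index set and $\mathcal{U}_i$ is a maximal frame-generating join-specification for $P$ for each $i\in I$, then $\bigcap_{i\in I}\mathcal{U}_i$ is a maximal frame-generating join-specification. (4) Even finite intersections of frame-generating join-specifications need not be frame-generating: there exist a poset $Q$ and frame-generating join-specifications $\mathcal{U}_1,\mathcal{U}_2$ for $Q$ such that $\mathcal{U}_1\cap\mathcal{U}_2$ is not frame-generating.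
   Context: A join-specification for a poset $P$ is a set $\mathcal{U}\subseteq\wp(P)$ such that $\bigvee S$ exists in $P$ for every $S\in\mathcal{U}$, and $\{p\}\in\mathcal{U}$ for every $p\in P$. A $\mathcal{U}$-ideal is a down-closed $C\subseteq P$ such that $\bigvee S\in C$ whenever $S\in\mathcal{U}$ and $S\subseteq C$. $\mathcal{I}_{\mathcal{U}}$ is the complete lattice of $\mathcal{U}$-ideals ordered by inclusion; $\Gamma_{\mathcal{U}}(S)$ is the smallest $\mathcal{U}$-ideal containing $S$. $\mathcal{U}^+=\{S\subseteq P:\bigvee S\text{ exists and }\bigvee S\in\Gamma_{\mathcal{U}}(S)\}$, and $\mathcal{U}$ is maximal if $\mathcal{U}=\mathcal{U}^+$. $\mathcal{U}$ is frame-generating if $\mathcal{I}_{\mathcal{U}}$ is a frame (a complete lattice satisfying $x\wedge\bigvee Y=\bigvee_{y\in Y}(x\wedge y)$). *)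

From HB Require Import structures.
From mathcomp Require Import all_boot all_order.
From mathcomp Require Import boolp classical_sets.

Set Implicit Arguments.
Unset Strict Implicit.
Unset Printing Implicit Defensive.

Local Open Scope classical_set_scope.

Section Bounds.
Variable A : Type.
Variable L : set A.
Variable le : A -> A -> Prop.

Definition is_lub_in (Y : set A) (x : A) : Prop :=
  L x /\ (forall y, Y y -> le y x) /\
  (forall z, L z -> (forall y, Y y -> le y z) -> le x z).

Definition is_glb_in (Y : set A) (x : A) : Prop :=
  L x /\ (forall y, Y y -> le x y) /\
  (forall z, L z -> (forall y, Y y -> le z y) -> le z x).

(* (L, le) is a complete lattice in which binary meets distribute over
   arbitrary joins:  x /\ \/Y = \/_{y in Y} (x /\ y). *)
Definition is_frame : Prop :=
  (forall Y, Y `<=` L -> exists x, is_lub_in Y x) /\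
  (forall Y, Y `<=` L -> exists x, is_glb_in Y x) /\
  (forall x Y, L x -> Y `<=` L ->
     forall j, is_lub_in Y j ->
     forall m, is_glb_in [set x; j] m ->
     forall j', is_lub_in [set m' | exists2 y, Y y & is_glb_in [set x; y] m'] j' ->
     m = j').
End Bounds.

Section JoinSpec.
Context {d : Order.disp_t} {P : porderType d}.

Definition is_join (S : set P) (x : P) : Prop :=
  (forall s, S s -> (s <= x)%O) /\
  (forall y, (forall s, S s -> (s <= y)%O) -> (x <= y)%O).

Definition join_exists (S : set P) : Prop := exists x, is_join S x.

Definition join_spec (U : set (set P)) : Prop :=
  (forall S, U S -> join_exists S) /\ (forall p : P, U [set p]).

Definition U_ideal (U : set (set P)) (C : set P) : Prop :=
  (forall x y : P, C y -> (x <= y)%O -> C x) /\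
  (forall S, U S -> S `<=` C -> forall x, is_join S x -> C x).

Definition Gamma (U : set (set P)) (S : set P) : set P :=
  [set x | forall C, U_ideal U C -> S `<=` C -> C x].

Definition Uplus (U : set (set P)) : set (set P) :=
  [set S | exists x, is_join S x /\ Gamma U S x].

Definition maximal_spec (U : set (set P)) : Prop := U = Uplus U.

Definition frame_generating (U : set (set P)) : Prop :=
  is_frame (U_ideal U) (fun C D : set P => C `<=` D).

End JoinSpec.

(* The heart of the matter is a first-order criterion: I_U is a frame iff
   p ∈ Γ_U(↓p ∩ ↓S) whenever S ∈ U and p ≤ ⋁S.  Necessity is the frame law for
   ↓p and the ideals ↓s, s ∈ S; for sufficiency, given an ideal C and ideals
   D ∈ Y, the elements r with C ∩ ↓r ⊆ ⋁_{D ∈ Y} (C ∩ D) form a U-ideal that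
   contains every member of Y.  The criterion only gets easier as U grows,
   which gives (1).  For a maximal U_i it says that ↓p ∩ ↓S, whose join is p,
   belongs to U_i; so it lies in the intersection, which gives (3).
   Both counterexamples live on a six-element poset.  In (2), {x, z, s} has
   join t, reached in the union by joining {x, z} to q and then {q, s} to t,
   but it belongs to neither maximal specification.  In (4), {s, z} has join
   t ≥ q and ↓q ∩ ↓{s, z} = {0, x, z}, whose ideal reaches q only through
   {x, z} or {0, x, z}, each of which belongs to just one specification. *)

From HB Require Import structures.
From mathcomp Require Import all_boot all_order.
From mathcomp Require Import boolp classical_sets.

Local Open Scope classical_set_scope.
Import Order.POrderTheory.

Section Bounds.
Context {A : Type} {L : set (set A)}.

Lemma is_lub_in_unique {Y : set (set A)} {a b} :
  is_lub_in L subset Y a -> is_lub_in L subset Y b -> a = b.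
Proof.
move=> [La [uba lea]] [Lb [ubb leb]].
by apply/seteqP; split; [exact: lea | exact: leb].
Qed.

Lemma is_glb_in_unique {Y : set (set A)} {a b} :
  is_glb_in L subset Y a -> is_glb_in L subset Y b -> a = b.
Proof.
move=> [La [lba gea]] [Lb [lbb geb]].
by apply/seteqP; split; [exact: geb | exact: gea].
Qed.

End Bounds.

Section Ideals.
Context {d : Order.disp_t} {P : porderType d}.
Implicit Types (U V G : set (set P)) (S T C D : set P) (Y : set (set P)).

Lemma is_join_unique {S a b} : is_join S a -> is_join S b -> a = b.
Proof. by move=> [ua la] [ub lb]; apply/le_anti; rewrite la // lb. Qed.

Lemma is_join_set1 (p : P) : is_join [set p] p.
Proof. by split=> [s ->|y]; [exact: lexx | apply]. Qed.

Lemma is_join_seq (s : seq P) a :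
  all (<= a)%O s -> (forall y, all (<= y)%O s -> (a <= y)%O) -> is_join [set` s] a.
Proof. by move=> /allP ub lub; split=> [t /ub|y ub_y] //; apply/lub/allP. Qed.

Definition down (p : P) : set P := [set r | (r <= p)%O].

Definition downI (p : P) S : set P := down p `&` \bigcup_(s in S) down s.

Lemma down_closed_U_ideal {U C} : U_ideal U C -> forall x y, C y -> (x <= y)%O -> C x.
Proof. by case. Qed.

Lemma U_ideal_join {U C S a} : U_ideal U C -> U S -> S `<=` C -> is_join S a -> C a.
Proof. by move=> [_ CU] US SC; apply: CU. Qed.

Lemma U_ideal_anti {U V C} : U `<=` V -> U_ideal V C -> U_ideal U C.
Proof. by move=> UV [dC VC]; split=> // S /UV; apply: VC. Qed.

Lemma U_ideal_down U p : U_ideal U (down p).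
Proof.
split=> [x y /= yp xy|S _ Sp x [_ lx]]; [exact: le_trans yp | exact: lx].
Qed.

Lemma U_ideal_bigcap U Y : Y `<=` U_ideal U -> U_ideal U (\bigcap_(C in Y) C).
Proof.
move=> YU; split=> [x y Yy xy C YC|S US SY a ja C YC].
  exact: down_closed_U_ideal (YU C YC) _ _ (Yy C YC) xy.
by apply: U_ideal_join (YU C YC) US _ ja => s /SY; apply.
Qed.

Lemma U_ideal_setI {U C D} : U_ideal U C -> U_ideal U D -> U_ideal U (C `&` D).
Proof.
move=> CU DU; split=> [x y [Cy Dy] xy|S US SCD a ja].
  by split; [exact: down_closed_U_ideal CU _ _ Cy xy
             | exact: down_closed_U_ideal DU _ _ Dy xy].
by split; [apply: U_ideal_join CU US _ ja | apply: U_ideal_join DU US _ ja]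
  => s /SCD [].
Qed.

Lemma Gamma_U_ideal U S : U_ideal U (Gamma U S).
Proof.
split=> [x y Gy xy C CU SC|T UT TG a ja C CU SC].
  exact: down_closed_U_ideal CU _ _ (Gy C CU SC) xy.
by apply: (U_ideal_join CU UT _ ja) => t /TG /(_ C CU SC).
Qed.

Lemma sub_Gamma U S : S `<=` Gamma U S.
Proof. by move=> s Ss C _; apply. Qed.

Lemma Gamma_sub {U S C} : U_ideal U C -> S `<=` C -> Gamma U S `<=` C.
Proof. by move=> CU SC x; apply. Qed.

Lemma Gamma_is_join {U T S a} : U S -> S `<=` T -> is_join S a -> Gamma U T a.
Proof.
move=> US ST; apply: U_ideal_join (Gamma_U_ideal U T) US _.
exact: subset_trans ST (@sub_Gamma U T).
Qed.

Lemma notin_Gamma {U T C} r : U_ideal U C -> T `<=` C -> ~ C r -> ~ Gamma U T r.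
Proof. by move=> CU TC Cr Gr; apply/Cr/(Gamma_sub CU TC). Qed.

Lemma Gamma_le_ub U T r b : Gamma U T r -> T `<=` down b -> (r <= b)%O.
Proof. by move=> Gr Tb; apply: (Gamma_sub (U_ideal_down U b) Tb _ Gr). Qed.

Lemma Gamma_mono_spec U V S : U `<=` V -> Gamma U S `<=` Gamma V S.
Proof. by move=> UV x Gx C /(U_ideal_anti UV); apply: Gx. Qed.

Lemma is_lub_Gamma U Y :
  is_lub_in (U_ideal U) subset Y (Gamma U (\bigcup_(C in Y) C)).
Proof.
split; first exact: Gamma_U_ideal.
split=> [C YC r Cr|D DU Dub]; first by apply: sub_Gamma; exists C.
by apply: Gamma_sub => // r [C YC Cr]; apply: Dub YC r Cr.
Qed.

Lemma is_glb_bigcap U Y : Y `<=` U_ideal U ->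
  is_glb_in (U_ideal U) subset Y (\bigcap_(C in Y) C).
Proof.
move=> YU; split; first exact: U_ideal_bigcap.
by split=> [C YC r /(_ C YC)|D _ Dlb r Dr C YC] //; apply: Dlb YC r Dr.
Qed.

Lemma is_glb_setI {U C D} : U_ideal U C -> U_ideal U D ->
  is_glb_in (U_ideal U) subset [set C; D] (C `&` D).
Proof.
move=> CU DU; split; first exact: U_ideal_setI.
split=> [_ [->|->] r []|F _ Flb r Fr] //.
by split; [apply: Flb (or_introl erefl) r Fr | apply: Flb (or_intror erefl) r Fr].
Qed.

Lemma glbs_setI U C Y : U_ideal U C -> Y `<=` U_ideal U ->
  [set m | exists2 D, Y D & is_glb_in (U_ideal U) subset [set C; D] m] =
  [set C `&` D | D in Y].
Proof.
move=> CU YU; apply/seteqP; split=> [m [D YD glb_m]|_ [D YD <-]].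
  by exists D => //; apply: is_glb_in_unique (is_glb_setI CU (YU D YD)) glb_m.
by exists D => //; apply: is_glb_setI CU (YU D YD).
Qed.

Lemma frame_generatingE U : frame_generating U <->
  (forall C Y, U_ideal U C -> Y `<=` U_ideal U ->
     C `&` Gamma U (\bigcup_(D in Y) D) `<=` Gamma U (\bigcup_(D in Y) (C `&` D))).
Proof.
have bigcup_glbs C Y : U_ideal U C -> Y `<=` U_ideal U ->
    Gamma U (\bigcup_(m in [set m | exists2 D, Y D &
       is_glb_in (U_ideal U) subset [set C; D] m]) m) =
    Gamma U (\bigcup_(D in Y) (C `&` D)).
  by move=> CU YU; rewrite glbs_setI // bigcup_image.
split=> [[_ [_ distr]] C Y CU YU | distr].
  have CG := is_glb_setI CU (Gamma_U_ideal U (\bigcup_(D in Y) D)).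
  rewrite (distr C Y CU YU _ (is_lub_Gamma U Y) _ CG _ (is_lub_Gamma U _)).
  by rewrite bigcup_glbs.
split; first by move=> Y _; eexists; apply: is_lub_Gamma.
split; first by move=> Y YU; eexists; apply: is_glb_bigcap.
move=> C Y CU YU j lub_j m glb_m j' lub_j'.
rewrite -(is_lub_in_unique (is_lub_Gamma U Y) lub_j) in glb_m.
rewrite -(is_glb_in_unique (is_glb_setI CU (Gamma_U_ideal U _)) glb_m).
rewrite -(is_lub_in_unique (is_lub_Gamma U _) lub_j') bigcup_glbs //.
apply/seteqP; split; first exact: distr.
apply: Gamma_sub; first by apply: U_ideal_setI CU (Gamma_U_ideal U _).
by move=> r [D YD [Cr Dr]]; split=> //; apply: sub_Gamma; exists D.
Qed.

Definition joins_distributive U :=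
  forall S a p, U S -> is_join S a -> (p <= a)%O -> Gamma U (downI p S) p.

Lemma frame_generatingP U : frame_generating U <-> joins_distributive U.
Proof.
rewrite frame_generatingE; split=> [distr S a p US ja pa | jd C Y CU YU].
  have downSU : down @` S `<=` U_ideal U by move=> _ [s _ <-]; apply: U_ideal_down.
  have Gpa : (down p `&` Gamma U (\bigcup_(D in down @` S) D)) p.
    split; first exact: lexx.
    apply: (down_closed_U_ideal (Gamma_U_ideal U _) p a _ pa).
    apply: (Gamma_is_join US _ ja) => s Ss.
    by exists (down s); [exists s | exact: lexx].
  move: (distr _ _ (U_ideal_down U p) downSU p Gpa).
  by rewrite bigcup_image -setI_bigcupr.
pose J := Gamma U (\bigcup_(D in Y) (C `&` D)).
pose K := [set r | C `&` down r `<=` J].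
have KU : U_ideal U K.
  split=> [x y Ky xy t [Ct tx]|S US SK a ja t [Ct ta]].
    by apply: Ky; split=> //; apply: le_trans tx xy.
  apply: (Gamma_sub (Gamma_U_ideal U _) _ t (jd S a t US ja ta)).
  move=> r [rt [s Ss rs]]; apply: (SK s Ss r); split=> //.
  exact: down_closed_U_ideal CU _ _ Ct rt.
move=> r [Cr Gr]; apply: (Gamma_sub KU _ r Gr r); last by split=> //; apply: lexx.
move=> x [D YD Dx] t [Ct tx]; apply: sub_Gamma; exists D => //.
by split=> //; apply: down_closed_U_ideal (YU D YD) _ _ Dx tx.
Qed.

Lemma is_join_Gamma {U T p} : T `<=` down p -> Gamma U T p -> is_join T p.
Proof. by move=> Tp Gp; split=> [t /Tp //|b Tb]; apply: Gamma_le_ub Gp Tb. Qed.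

Lemma sub_Uplus U : (forall S, U S -> join_exists S) -> U `<=` Uplus U.
Proof.
move=> UJ S US; have [a ja] := UJ S US; exists a; split=> //.
exact: Gamma_is_join US (@subset_refl _ S) ja.
Qed.

Lemma Uplus_mono U V : U `<=` V -> Uplus U `<=` Uplus V.
Proof. by move=> UV S [a [ja Ga]]; exists a; split=> //; apply: Gamma_mono_spec Ga. Qed.

Lemma U_ideal_Uplus U : (forall S, U S -> join_exists S) -> U_ideal (Uplus U) = U_ideal U.
Proof.
move=> UJ; apply/funext => C; apply/propext; split; first exact/U_ideal_anti/sub_Uplus.
move=> CU; split; first exact: down_closed_U_ideal CU.
by move=> S [a [ja Ga]] SC b /(is_join_unique ja) <-; apply: Gamma_sub CU SC a Ga.
Qed.

Lemma Gamma_Uplus U : (forall S, U S -> join_exists S) -> Gamma (Uplus U) = Gamma U.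
Proof. by move=> UJ; rewrite /Gamma U_ideal_Uplus. Qed.

Lemma maximal_spec_Uplus U : (forall S, U S -> join_exists S) -> maximal_spec (Uplus U).
Proof. by move=> UJ; rewrite /maximal_spec [RHS]/Uplus Gamma_Uplus. Qed.

Lemma join_spec_Uplus U : join_spec (Uplus U).
Proof.
split=> [S [a [ja _]]|p]; first by exists a.
by exists p; split; [apply: is_join_set1 | apply: sub_Gamma].
Qed.

Lemma frame_generating_Uplus U : (forall S, U S -> join_exists S) ->
  frame_generating (Uplus U) = frame_generating U.
Proof. by move=> UJ; rewrite /frame_generating U_ideal_Uplus. Qed.

Lemma U_ideal_setU_set1 G : U_ideal (range set1 `|` G) = U_ideal G.
Proof.
apply/funext => C; apply/propext; split; first by apply: U_ideal_anti => S GS; right.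
move=> CU; split; first exact: down_closed_U_ideal CU.
move=> S [[p _ <-] SC a /(is_join_unique (is_join_set1 p)) <- | GS]; first exact: SC.
by move=> SC a; apply: U_ideal_join CU GS SC.
Qed.

Lemma join_spec_setU_set1 G : (forall S, G S -> join_exists S) ->
  join_spec (range set1 `|` G).
Proof.
move=> GJ; split=> [S [[p _ <-]|/GJ //]|p]; first by exists p; apply: is_join_set1.
by left; exists p.
Qed.

Lemma frame_generating_setU_set1 G :
  frame_generating (range set1 `|` G) = frame_generating G.
Proof. by rewrite /frame_generating U_ideal_setU_set1. Qed.

Lemma Gamma_downI_has U (s : seq P) p : has (>= p)%O s -> Gamma U (downI p [set` s]) p.
Proof. by move=> /hasP [t ts pt]; apply: sub_Gamma; split; [apply: lexx | exists t]. Qed.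

Lemma downI_sub_seq (s s' : seq P) p :
  all (fun r => (r <= p)%O && has (>= r)%O s) s' -> [set` s'] `<=` downI p [set` s].
Proof. by move=> /allP sub r /sub /andP [rp /hasP [t ts rt]]; split=> //; exists t. Qed.

Section Families.
Variables (I : Type) (U : I -> set (set P)).

Lemma frame_generating_bigcup :
  (forall i, frame_generating (U i)) -> frame_generating [set S | exists i, U i S].
Proof.
move=> Ufg; apply/frame_generatingP => S a p [i US] ja pa.
apply: (@Gamma_mono_spec (U i)); first by move=> T UT; exists i.
exact: (proj1 (frame_generatingP _) (Ufg i) S a p US ja pa).
Qed.

Let V := [set S | forall i, U i S].

Lemma join_spec_bigcap : inhabited I -> (forall i, join_spec (U i)) -> join_spec V.
Proof.
move=> [i0] Ujs; split=> [S /(_ i0) /(proj1 (Ujs i0)) //|p i].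
exact: (proj2 (Ujs i)).
Qed.

Lemma maximal_spec_bigcap :
  join_spec V -> (forall i, maximal_spec (U i)) -> maximal_spec V.
Proof.
move=> [VJ _] Umax; apply/seteqP; split; first exact: sub_Uplus.
by move=> S VS i; rewrite Umax; apply: Uplus_mono VS => T; apply.
Qed.

Lemma frame_generating_bigcap : inhabited I ->
  (forall i, frame_generating (U i) /\ maximal_spec (U i)) -> frame_generating V.
Proof.
move=> [i0] Ufm; apply/frame_generatingP => S a p VS ja pa.
have downIp i : Gamma (U i) (downI p S) p.
  exact: (proj1 (frame_generatingP _) (proj1 (Ufm i)) S a p (VS i) ja pa).
have downI_le : downI p S `<=` down p by move=> r [].
have join_p := is_join_Gamma downI_le (downIp i0).
have VdownI : V (downI p S).
  by move=> i; rewrite (proj2 (Ufm i)); exists p; split.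
exact: Gamma_is_join VdownI (@subset_refl _ _) join_p.
Qed.

End Families.

End Ideals.

Inductive E := E0 | Ex | Ez | Es | Eq | Et.

Definition E_to_nat e :=
  match e with E0 => 0 | Ex => 1 | Ez => 2 | Es => 3 | Eq => 4 | Et => 5 end.
Definition nat_to_E n :=
  match n with
  | 0 => Some E0 | 1 => Some Ex | 2 => Some Ez | 3 => Some Es | 4 => Some Eq
  | 5 => Some Et | _ => None
  end.
Lemma E_to_natK : pcancel E_to_nat nat_to_E. Proof. by case. Qed.
HB.instance Definition _ := Countable.copy E (pcan_type E_to_natK).

(* Hasse diagram: E0 < Ex, Ez;  Ex < Es, Eq;  Ez < Eq;  Es, Eq < Et. *)
Definition E_le (a b : E) : bool :=
  match a, b with
  | E0, _ => true
  | Ex, (Ex | Es | Eq | Et) => true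
  | Ez, (Ez | Eq | Et) => true
  | Es, (Es | Et) => true
  | Eq, (Eq | Et) => true
  | Et, Et => true
  | _, _ => false
  end.
Lemma E_le_refl : reflexive E_le. Proof. by case. Qed.
Lemma E_le_anti : antisymmetric E_le. Proof. by case; case. Qed.
Lemma E_le_trans : transitive E_le. Proof. by case; case; case. Qed.
HB.instance Definition _ :=
  Order.Le_isPOrder.Build (Order.Disp tt tt) E E_le_refl E_le_anti E_le_trans.

Definition xz : set E := [set` [:: Ex; Ez]].
Definition qs : set E := [set` [:: Eq; Es]].
Definition sz : set E := [set` [:: Es; Ez]].
Definition oxz : set E := [set` [:: E0; Ex; Ez]].
Definition xzs : set E := [set` [:: Ex; Ez; Es]].

Lemma join_xz : is_join xz Eq. Proof. by apply: is_join_seq => // -[]. Qed.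
Lemma join_qs : is_join qs Et. Proof. by apply: is_join_seq => // -[]. Qed.
Lemma join_sz : is_join sz Et. Proof. by apply: is_join_seq => // -[]. Qed.
Lemma join_oxz : is_join oxz Eq. Proof. by apply: is_join_seq => // -[]. Qed.
Lemma join_xzs : is_join xzs Et. Proof. by apply: is_join_seq => // -[]. Qed.

Definition U1 := Uplus [set xz].
Definition U2 := Uplus [set qs].

Lemma join_exists_U1 S : [set xz] S -> join_exists S.
Proof. by move=> ->; exists Eq; apply: join_xz. Qed.

Lemma join_exists_U2 S : [set qs] S -> join_exists S.
Proof. by move=> ->; exists Et; apply: join_qs. Qed.

Lemma frame_generating_U1 : frame_generating U1.
Proof.
rewrite /U1 frame_generating_Uplus; last exact: join_exists_U1.
apply/frame_generatingP => S a p -> /(is_join_unique join_xz) <-.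
case: p => // _; try by apply: Gamma_downI_has.
by apply: (Gamma_is_join (S := xz)) join_xz => //; apply: downI_sub_seq.
Qed.

Lemma frame_generating_U2 : frame_generating U2.
Proof.
rewrite /U2 frame_generating_Uplus; last exact: join_exists_U2.
apply/frame_generatingP => S a p -> /(is_join_unique join_qs) <-.
case: p => // _; try by apply: Gamma_downI_has.
by apply: (Gamma_is_join (S := qs)) join_qs => //; apply: downI_sub_seq.
Qed.

Lemma xzs_in_Uplus_U1U2 : Uplus (U1 `|` U2) xzs.
Proof.
exists Et; split=> [|C CU xzsC]; first exact: join_xzs.
have Cq : C Eq.
  apply: (U_ideal_join CU _ _ join_xz); first by left; apply: sub_Uplus join_exists_U1 _ _.
  by case=> // _; apply: xzsC.
apply: (U_ideal_join CU _ _ join_qs); first by right; apply: sub_Uplus join_exists_U2 _ _.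
by case=> // _; apply: xzsC.
Qed.

Lemma xzs_notin_U1 : ~ U1 xzs.
Proof.
case=> a [/(is_join_unique join_xzs) <-].
apply: (notin_Gamma (C := [set` [:: E0; Ex; Ez; Es; Eq]])) => //; last by case.
split=> [x y|S -> _ b /(is_join_unique join_xz) <-] //.
by case: x; case: y.
Qed.

Lemma xzs_notin_U2 : ~ U2 xzs.
Proof.
case=> a [/(is_join_unique join_xzs) <-].
apply: (notin_Gamma (C := [set` [:: E0; Ex; Ez; Es]])) => //; last by case.
split=> [x y|S -> qsC]; first by case: x; case: y.
by have := qsC Eq isT.
Qed.

Lemma not_maximal_spec_U1U2 : ~ maximal_spec (U1 `|` U2).
Proof. by move=> max; move: xzs_in_Uplus_U1U2; rewrite -max => -[/xzs_notin_U1|/xzs_notin_U2]. Qed.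

Definition W1 := range set1 `|` [set xz; sz].
Definition W2 := range set1 `|` [set sz; oxz].

Lemma join_spec_W1 : join_spec W1.
Proof.
by apply: join_spec_setU_set1 => S [->|->]; [exists Eq; apply: join_xz | exists Et; apply: join_sz].
Qed.

Lemma join_spec_W2 : join_spec W2.
Proof.
by apply: join_spec_setU_set1 => S [->|->]; [exists Et; apply: join_sz | exists Eq; apply: join_oxz].
Qed.

Lemma frame_generating_W1 : frame_generating W1.
Proof.
rewrite /W1 frame_generating_setU_set1; apply/frame_generatingP => S a p [->|->].
  move=> /(is_join_unique join_xz) <-; case: p => // _; try by apply: Gamma_downI_has.
  by apply: (Gamma_is_join (S := xz)) join_xz; [left | apply: downI_sub_seq].
move=> /(is_join_unique join_sz) <-; case: p => // _; try by apply: Gamma_downI_has.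
  by apply: (Gamma_is_join (S := xz)) join_xz; [left | apply: downI_sub_seq].
by apply: (Gamma_is_join (S := sz)) join_sz; [right | apply: downI_sub_seq].
Qed.

Lemma frame_generating_W2 : frame_generating W2.
Proof.
rewrite /W2 frame_generating_setU_set1; apply/frame_generatingP => S a p [->|->].
  move=> /(is_join_unique join_sz) <-; case: p => // _; try by apply: Gamma_downI_has.
    by apply: (Gamma_is_join (S := oxz)) join_oxz; [right | apply: downI_sub_seq].
  by apply: (Gamma_is_join (S := sz)) join_sz; [left | apply: downI_sub_seq].
move=> /(is_join_unique join_oxz) <-; case: p => // _; try by apply: Gamma_downI_has.
by apply: (Gamma_is_join (S := oxz)) join_oxz; [right | apply: downI_sub_seq].
Qed.

Lemma xz_notin_W2 : ~ W2 xz.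
Proof.
case=> [[p _ e]|[e|e]].
- have : [set p] Ex /\ [set p] Ez by rewrite e.
  by case=> <-.
- by move: (isT : xz Ex); rewrite e.
- by move: (isT : oxz E0); rewrite -e.
Qed.

Lemma not_frame_generating_W1W2 : ~ frame_generating (W1 `&` W2).
Proof.
move=> /frame_generatingP /(_ sz Et Eq) Gq.
have W12sz : (W1 `&` W2) sz by split; right; [right | left].
apply: (notin_Gamma (C := oxz)) (Gq W12sz join_sz isT) => //.
  split=> [x y|S [[[p _ <-]|[->|->]] W2S] Soxz a ja]; first by case: x; case: y.
  - by rewrite -(is_join_unique (is_join_set1 p) ja); apply: Soxz.
  - by have := xz_notin_W2 W2S.
  - by have := Soxz Es isT.
by move=> r [rq [t]]; move: rq; case: r; case: t.
Qed.

Theorem theorem4p6 :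
  (* (1) unions of frame-generating join-specifications *)
  (forall (d : Order.disp_t) (P : porderType d) (I : Type) (U : I -> set (set P)),
     inhabited I ->
     (forall i, join_spec (U i) /\ frame_generating (U i)) ->
     frame_generating [set S | exists i, U i S]) /\
  (* (2) a union of two maximal frame-generating ones need not be maximal *)
  (exists (d : Order.disp_t) (Q : porderType d) (U1 U2 : set (set Q)),
     join_spec U1 /\ frame_generating U1 /\ maximal_spec U1 /\
     join_spec U2 /\ frame_generating U2 /\ maximal_spec U2 /\
     ~ maximal_spec (U1 `|` U2)) /\
  (* (3) intersections of maximal frame-generating join-specifications *)
  (forall (d : Order.disp_t) (P : porderType d) (I : Type) (U : I -> set (set P)),
     inhabited I ->
     (forall i, join_spec (U i) /\ frame_generating (U i) /\ maximal_spec (U i)) ->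
     let V := [set S | forall i, U i S] in
     join_spec V /\ frame_generating V /\ maximal_spec V) /\
  (* (4) an intersection of two frame-generating ones need not be frame-generating *)
  (exists (d : Order.disp_t) (Q : porderType d) (U1 U2 : set (set Q)),
     join_spec U1 /\ frame_generating U1 /\
     join_spec U2 /\ frame_generating U2 /\
     ~ frame_generating (U1 `&` U2)).
Proof.
split.
  by move=> d P I U _ Ufg; apply: frame_generating_bigcup => i; case: (Ufg i).
split.
  exists _, E, U1, U2; split; first exact: join_spec_Uplus.
  split; first exact: frame_generating_U1.
  split; first exact/maximal_spec_Uplus/join_exists_U1.
  split; first exact: join_spec_Uplus.
  split; first exact: frame_generating_U2.
  split; first exact/maximal_spec_Uplus/join_exists_U2.
  exact: not_maximal_spec_U1U2.
split.
  move=> d P I U inhI Ujfm V.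
  have jsV : join_spec V by apply: join_spec_bigcap inhI _ => i; case: (Ujfm i).
  split=> //; split.
    by apply: frame_generating_bigcap inhI _ => i; case: (Ujfm i) => _ [].
  by apply: maximal_spec_bigcap jsV _ => i; case: (Ujfm i) => _ [].
exists _, E, W1, W2; split; first exact: join_spec_W1.
split; first exact: frame_generating_W1.
split; first exact: join_spec_W2.
split; first exact: frame_generating_W2.
exact: not_frame_generating_W1W2.
Qed.
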